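(* Let $G$ be a finite simple connected graph with at least one edge, let $W$ be a minimal vertex cover of $G$, and let $s\ge 0$. Let $f=\prod_{y\in V(G)\setminus W} y^{(0)}\in\mathcal{J}_s(R)$. Then $$\langle \mathcal{J}_s(W)\rangle = \mathcal{J}_s(I(G)) : f^{\infty}.$$
   Context: $R=k[x_1,\dots,x_n]$ over a field $k$, with the vertices of $G$ identified with the variables. The edge ideal is $I(G)=\langle x_ix_j : \{x_i,x_j\}\in E(G)\rangle$. A vertex cover is a set of vertices meeting every edge; minimal if no proper subset is a vertex cover. $\mathcal{J}_s(R)=k[x_i^{(l)} : 1\le i\le n,\ 0\le l\le s]$. For $I=\langle f_1,\dots,f_r\rangle\subseteq R$, write $f_m(x_1^{(0)}+x_1^{(1)}t+\cdots+x_1^{(s)}t^s,\dots)\equiv\sum_{l=0}^s\alpha_m^{(l)}t^l \pmod{t^{s+1}}$; then $\mathcal{J}_s(I)=\langle\alpha_m^{(l)}\rangle\subseteq\mathcal{J}_s(R)$. For $W\subseteq V(G)$, $\mathcal{J}_s(W)=\{x^{(j)} : x\in W,\ 0\le j\le s\}$. The saturation is $I:f^\infty=\{g : gf^N\in I \text{ for some } N\ge 0\}$. *)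

From HB Require Import structures.
From mathcomp Require Import all_boot all_order all_algebra.
From mathcomp Require Import mpoly.

Set Implicit Arguments.
Unset Strict Implicit.
Unset Printing Implicit Defensive.

Import GRing.Theory.
Local Open Scope ring_scope.

Definition simple_graph (n : nat) (adj : rel 'I_n) : Prop :=
  (forall i j : 'I_n, adj i j = adj j i) /\ (forall i : 'I_n, adj i i = false).

Definition connected_graph (n : nat) (adj : rel 'I_n) : Prop :=
  forall i j : 'I_n, connect adj i j.

Definition has_edge (n : nat) (adj : rel 'I_n) : Prop :=
  exists i j : 'I_n, adj i j.

Definition is_vertex_cover (n : nat) (adj : rel 'I_n) (W : {set 'I_n}) : Prop :=
  forall i j : 'I_n, adj i j -> (i \in W) || (j \in W).

Definition is_minimal_vertex_cover (n : nat) (adj : rel 'I_n) (W : {set 'I_n}) :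
  Prop :=
  is_vertex_cover adj W /\
  forall W' : {set 'I_n}, W' \proper W -> ~ is_vertex_cover adj W'.

Definition in_ideal_gen (A : comNzRingType) (S : A -> Prop) (g : A) : Prop :=
  exists r : seq (A * A),
    (forall p, p \in r -> S p.2) /\ g = \sum_(p <- r) p.1 * p.2.

Definition in_saturation (A : comNzRingType) (I : A -> Prop) (f g : A) : Prop :=
  exists N : nat, I (g * f ^+ N).

(* R = k[x_0,...,x_{n-1}] is {mpoly k[n]};
   J_s(R) = k[x_i^(l) : i < n, l <= s] is {mpoly k[n * s.+1]},
   the variable x_i^(l) being 'X_(jvar i l). *)
Definition jvar (n s : nat) (i : 'I_n) (l : 'I_s.+1) : 'I_(n * s.+1) :=
  mxvec_index i l.

Definition jX (k : fieldType) (n s : nat) (i : 'I_n) (l : 'I_s.+1)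
  : {mpoly k[n * s.+1]} := 'X_(jvar i l).

(* f(x_1^(0) + x_1^(1) t + ... + x_1^(s) t^s, ...) as a polynomial in t
   with coefficients in J_s(R). *)
Definition jet_subst (k : fieldType) (n s : nat) (f : {mpoly k[n]})
  : {poly {mpoly k[n * s.+1]}} :=
  mmap (fun c : k => (c%:MP)%:P)
       (fun i : 'I_n => \sum_(l < s.+1) (jX k i l)%:P * 'X^l) f.

(* alpha^(l) : the coefficient of t^l (l <= s), i.e. of the class mod t^{s+1}. *)
Definition jet_coef (k : fieldType) (n s : nat) (f : {mpoly k[n]}) (l : 'I_s.+1)
  : {mpoly k[n * s.+1]} := (@jet_subst k n s f)`_l.

Definition jet_gens (k : fieldType) (n s : nat) (gens : {mpoly k[n]} -> Prop)
  (a : {mpoly k[n * s.+1]}) : Prop :=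
  exists (f : {mpoly k[n]}) (l : 'I_s.+1), gens f /\ a = @jet_coef k n s f l.

Definition edge_gens (k : fieldType) (n : nat) (adj : rel 'I_n)
  (f : {mpoly k[n]}) : Prop :=
  exists i j : 'I_n, adj i j /\ f = 'X_i * 'X_j.

Definition jet_edge_ideal (k : fieldType) (n s : nat) (adj : rel 'I_n)
  : {mpoly k[n * s.+1]} -> Prop :=
  in_ideal_gen (@jet_gens k n s (@edge_gens k n adj)).

Definition jet_vars (k : fieldType) (n s : nat) (W : {set 'I_n})
  (a : {mpoly k[n * s.+1]}) : Prop :=
  exists (i : 'I_n) (l : 'I_s.+1), i \in W /\ a = jX k i l.

Definition compl_prod (k : fieldType) (n s : nat) (W : {set 'I_n})
  : {mpoly k[n * s.+1]} :=
  \prod_(y in ~: W) jX k y ord0.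

(* The generators of J_s(I(G)) are sums of products x_i^(a) x_j^(l-a) over
   edges {i, j}; as W covers each edge, J_s(I(G)) lies in the monomial
   ideal <J_s(W)>.  For this monomial ideal the variables y^(0),
   y outside W, are nonzerodivisors, so the saturation by f is still inside
   <J_s(W)>.  Conversely, minimality of W gives every i in W a neighbour y
   outside W, and the t^l-coefficients of x_i x_y,
     x_i^(l) y^(0) + sum_(a < l) x_i^(a) y^(l - a),
   show by strong induction on l that x_i^(l) (y^(0))^(l+1) lies in
   J_s(I(G)); as y^(0) divides f, x_i^(l) lies in the saturation. *)
From HB Require Import structures.
From mathcomp Require Import all_boot all_order all_algebra.
From mathcomp Require Import mpoly ring.

Set Implicit Arguments.
Unset Strict Implicit.
Unset Printing Implicit Defensive.

Import GRing.Theory.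
Local Open Scope ring_scope.

Section IdealGen.
Variables (A : comNzRingType) (S : A -> Prop).
Local Notation I := (in_ideal_gen S).

Lemma ideal_gen0 : I 0.
Proof. by exists [::]; rewrite big_nil. Qed.

Lemma ideal_genD a b : I a -> I b -> I (a + b).
Proof.
move=> [r1 [S1 ->]] [r2 [S2 ->]]; exists (r1 ++ r2); rewrite big_cat.
by split=> // p; rewrite mem_cat => /orP [/S1|/S2].
Qed.

Lemma ideal_genMl a b : I b -> I (a * b).
Proof.
move=> [r [Sr ->]]; exists [seq (a * p.1, p.2) | p <- r]; split.
  by move=> p /mapP [q /Sr Sq ->].
by rewrite big_map mulr_sumr; apply: eq_bigr => p _; rewrite mulrA.
Qed.

Lemma ideal_genMr a b : I a -> I (a * b).
Proof. by rewrite mulrC; apply: ideal_genMl. Qed.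

Lemma ideal_genB a b : I a -> I b -> I (a - b).
Proof. by move=> Ia Ib; rewrite -mulN1r; apply/ideal_genD/ideal_genMl. Qed.

Lemma ideal_gen_mem x : S x -> I x.
Proof.
move=> Sx; exists [:: (1, x)]; rewrite big_seq1 mul1r.
by split=> // p; rewrite inE => /eqP ->.
Qed.

Lemma ideal_gen_sum (T : Type) (r : seq T) (P : pred T) (F : T -> A) :
  (forall i, P i -> I (F i)) -> I (\sum_(i <- r | P i) F i).
Proof. by move=> IF; apply: big_ind => //; [exact: ideal_gen0 | exact: ideal_genD]. Qed.

Lemma ideal_gen_ind (Q : A -> Prop) :
  Q 0 -> (forall a b, Q a -> Q b -> Q (a + b)) ->
  (forall a b, Q b -> Q (a * b)) -> (forall x, S x -> Q x) ->
  forall g, I g -> Q g.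
Proof.
move=> Q0 QD QM SQ g [r [Sr ->]]; rewrite big_seq.
by apply: big_ind => // p /Sr /SQ; apply: QM.
Qed.

End IdealGen.

Lemma ideal_gen_sub (A : comNzRingType) (S T : A -> Prop) g :
  (forall x, S x -> in_ideal_gen T x) -> in_ideal_gen S g -> in_ideal_gen T g.
Proof.
move=> ST; exact: ideal_gen_ind (ideal_gen0 T) (@ideal_genD _ T) (@ideal_genMl _ T) ST g.
Qed.

Section Saturation.
Variables (A : comNzRingType) (S : A -> Prop) (f : A).
Local Notation I := (in_ideal_gen S).
Local Notation sat := (in_saturation I f).

Lemma saturation0 : sat 0.
Proof. by exists 0%N; rewrite mul0r; apply: ideal_gen0. Qed.

Lemma saturationD a b : sat a -> sat b -> sat (a + b).
Proof.
move=> [M1 Ia] [M2 Ib]; exists (M1 + M2)%N.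
rewrite exprD mulrDl mulrA [b * _]mulrCA.
by apply: ideal_genD; [apply: ideal_genMr | apply: ideal_genMl].
Qed.

Lemma saturationMl a b : sat b -> sat (a * b).
Proof. by move=> [M Ib]; exists M; rewrite -mulrA; apply: ideal_genMl. Qed.

Lemma saturation_ideal_gen (T : A -> Prop) g :
  (forall x, T x -> sat x) -> in_ideal_gen T g -> sat g.
Proof.
move=> Tsat; exact: ideal_gen_ind saturation0 saturationD saturationMl Tsat g.
Qed.

End Saturation.

Section Regular.
Variables (A : comNzRingType) (I : A -> Prop).

Definition regular_mod (h : A) : Prop := forall g, I (g * h) -> I g.

Lemma regular_mod_prod (T : Type) (r : seq T) (P : pred T) (F : T -> A) :
  (forall i, P i -> regular_mod (F i)) -> regular_mod (\prod_(i <- r | P i) F i).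
Proof.
move=> regF; apply: big_ind => //; first by move=> g; rewrite mulr1.
by move=> h1 h2 reg1 reg2 g; rewrite mulrA => /reg2 /reg1.
Qed.

Lemma regular_modX h M : regular_mod h -> regular_mod (h ^+ M).
Proof.
move=> regh; elim: M => [g|M IH g]; first by rewrite expr0 mulr1.
by rewrite exprSr mulrA => /regh /IH.
Qed.

End Regular.

Section VarIdeal.
Variables (R : comNzRingType) (N : nat) (P : pred 'I_N).
Implicit Types (g : {mpoly R[N]}) (m : 'X_{1..N}).

Definition var_ideal : {mpoly R[N]} -> Prop :=
  in_ideal_gen (fun a => exists2 v, P v & a = 'X_v).

Definition monomials_divisible g : Prop :=
  forall m, g@_m != 0 -> exists2 v, P v & (0 < m v)%N.

Lemma mcoeffMX_le g u m : (g * 'X_[u])@_m != 0 -> (u <= m)%MM.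
Proof.
rewrite {1}(mpolyE g) mulr_suml raddf_sum /=.
apply: contraR => not_um; apply/eqP; apply: big1 => m' _.
rewrite -scalerAl -mpolyXD mcoeffZ mcoeffX.
have [um|] := eqVneq (m' + u)%MM m; last by rewrite mulr0.
by rewrite -um addmC lem_addr in not_um.
Qed.

Lemma var_idealP g : var_ideal g <-> monomials_divisible g.
Proof.
split.
  move=> [r [Pr ->]]; rewrite big_seq; apply: big_ind.
  - by move=> m; rewrite mcoeff0 eqxx.
  - move=> a b diva divb m; rewrite mcoeffD.
    by have [->|/diva //] := eqVneq a@_m 0; rewrite add0r => /divb.
  move=> p /Pr [v Pv ->] m /mcoeffMX_le /mnm_lepP /(_ v).
  by rewrite mnm1E eqxx; exists v.
move=> divg; rewrite (mpolyE g); apply: ideal_gen_sum => m _.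
have [->|/divg [v Pv mv]] := eqVneq g@_m 0; first by rewrite scale0r; apply: ideal_gen0.
have le_vm : (U_(v) <= m)%MM.
  by apply/mnm_lepP => j; rewrite mnm1E; case: eqP => // <-.
rewrite -(submK le_vm) mpolyXD scalerAl.
by apply/ideal_genMl/ideal_gen_mem; exists v.
Qed.

Lemma regular_var_ideal u : ~~ P u -> regular_mod var_ideal 'X_u.
Proof.
move=> Pu g /var_idealP divgu; apply/var_idealP => m gm.
have [|v Pv] := divgu (U_(u) + m)%MM; first by rewrite mcoeffMX.
rewrite mnmDE mnm1E; case: (eqVneq u v) => [uv|_]; first by rewrite uv Pv in Pu.
by exists v.
Qed.

End VarIdeal.

Section JetCoef.
Variables (k : fieldType) (n s : nat).
Local Notation MP := {mpoly k[n * s.+1]}.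

Lemma jvar_inj (i i' : 'I_n) (l l' : 'I_s.+1) :
  jvar i l = jvar i' l' -> i = i' /\ l = l'.
Proof. by move=> /cast_ord_inj /enum_rank_inj [-> ->]. Qed.

(* x_i^(a), extended by 0 for a > s, so that coefficients of products of
   jets can be written as full convolutions. *)
Definition jXn (i : 'I_n) (a : nat) : MP :=
  if (a < s.+1)%N then jX k i (inord a) else 0.

Lemma jXn_ord i (l : 'I_s.+1) : jXn i l = jX k i l.
Proof. by rewrite /jXn ltn_ord inord_val. Qed.

Definition jet_series (i : 'I_n) : {poly MP} :=
  \sum_(l < s.+1) (jX k i l)%:P * 'X^l.

Lemma coef_jet_series i a : (jet_series i)`_a = jXn i a.
Proof.
rewrite /jet_series /jXn coef_sum.
under eq_bigr do rewrite coefCM coefXn.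
case: ltnP => ha.
  rewrite (bigD1 (inord a)) //= inordK // eqxx mulr1 big1 ?addr0 // => l nl.
  case: eqP => [al|]; last by rewrite mulr0.
  by case/eqP: nl; apply: val_inj; rewrite /= inordK // al.
apply: big1 => l _; case: eqP => [al|]; last by rewrite mulr0.
by move: (ltn_ord l); rewrite -al ltnNge ha.
Qed.

Lemma jet_subst_mulXX (i j : 'I_n) :
  jet_subst s ('X_i * 'X_j : {mpoly k[n]}) = jet_series i * jet_series j.
Proof.
rewrite /jet_subst -mpolyXD /mmap msuppX big_seq1 mcoeffX eqxx.
rewrite mpolyC1 polyC1 mul1r commr_mmap1_M; last by move=> ? ?; apply: mulrC.
by rewrite !mmap1U.
Qed.

Lemma jet_coef_mulXX (i j : 'I_n) (l : 'I_s.+1) :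
  jet_coef ('X_i * 'X_j : {mpoly k[n]}) l = \sum_(a < l.+1) jXn i a * jXn j (l - a).
Proof.
rewrite /jet_coef jet_subst_mulXX coefM.
by apply: eq_bigr => a _; congr (_ * _); apply: coef_jet_series.
Qed.

End JetCoef.

Section JetEdgeIdeal.
Variables (k : fieldType) (n s : nat) (adj : rel 'I_n) (W : {set 'I_n}).
Local Notation J := (@jet_edge_ideal k n s adj).
Local Notation JW := (in_ideal_gen (@jet_vars k n s W)).
Local Notation f := (@compl_prod k n s W).

Definition jet_pred : pred 'I_(n * s.+1) :=
  [pred v | [exists i in W, exists l, v == jvar i l]].

Lemma jet_vars_var_ideal g : JW g <-> var_ideal jet_pred g.
Proof.
split; apply: ideal_gen_sub.
  move=> _ [i [l [iW ->]]]; apply: ideal_gen_mem; exists (jvar i l) => //.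
  by apply/existsP; exists i; rewrite iW; apply/existsP; exists l.
move=> _ [v /existsP [i /andP [iW /existsP [l /eqP ->]]] ->].
by apply: ideal_gen_mem; exists i, l.
Qed.

Lemma regular_compl_prod : regular_mod (var_ideal jet_pred) f.
Proof.
apply: regular_mod_prod => y; rewrite inE => yW; apply: regular_var_ideal.
apply/existsP => [[i /andP [iW /existsP [l /eqP /jvar_inj [yi _]]]]].
by rewrite yi iW in yW.
Qed.

Lemma jet_edge_ideal_sub g : is_vertex_cover adj W -> J g -> JW g.
Proof.
move=> cover; apply: ideal_gen_sub => _ [_ [l [[i [j [ij ->]]] ->]]].
rewrite jet_coef_mulXX; apply: ideal_gen_sum => a _; rewrite /jXn.
case/orP: (cover i j ij) => [iW|jW].
  case: (a < s.+1)%N; last by rewrite mul0r; apply: ideal_gen0.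
  by apply/ideal_genMr/ideal_gen_mem; exists i, (inord a).
case: (l - a < s.+1)%N; last by rewrite mulr0; apply: ideal_gen0.
by apply/ideal_genMl/ideal_gen_mem; exists j, (inord (l - a)).
Qed.

Lemma minimal_cover_neighbour i :
  simple_graph adj -> is_minimal_vertex_cover adj W -> i \in W ->
  exists2 y, y \notin W & adj i y.
Proof.
move=> [sym irr] [cover min] iW.
have [/existsP [y /andP [yW iy]] | no_nb] := boolP [exists y, (y \notin W) && adj i y].
  by exists y.
have nbW z : adj i z -> z \in W.
  by move=> iz; apply: contraR no_nb => zW; apply/existsP; exists z; rewrite zW.
exfalso; apply: (min _ (properD1 iW)) => a b ab; rewrite !in_setD1.
have [ai | ai] := eqVneq a i.
  by subst a; rewrite /= nbW // andbT; apply: contraTneq ab => ->; rewrite irr.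
have [bi | _] := eqVneq b i; last exact: cover.
by subst b; rewrite /= orbF nbW // sym.
Qed.

(* Strong induction on l: the t^l-coefficient of x_i x_y, multiplied by
   (y^(0))^l, equals x_i^(l) (y^(0))^(l+1) plus multiples of the earlier
   x_i^(a) (y^(0))^(a+1). *)
Lemma jet_edge_ideal_var_exp i y l :
  adj i y -> J (jXn k s i l * jX k y ord0 ^+ l.+1).
Proof.
move=> iy; elim/ltn_ind: l => l IH; set y0 := jX k y ord0.
have [ls | sl] := ltnP l s.+1; last by rewrite /jXn ltnNge sl mul0r; apply: ideal_gen0.
have Jcoef : J (jet_coef ('X_i * 'X_y : {mpoly k[n]}) (Ordinal ls)).
  by apply: ideal_gen_mem; exists ('X_i * 'X_y), (Ordinal ls); split=> //; exists i, y.
rewrite jet_coef_mulXX big_ord_recr /= subnn (@jXn_ord k _ s y ord0) in Jcoef.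
set Sum := \sum_(a < l) _ in Jcoef.
have -> : jXn k s i l * y0 ^+ l.+1 = y0 ^+ l * (Sum + jXn k s i l * y0) - Sum * y0 ^+ l.
  by rewrite exprS; ring.
apply: ideal_genB; first exact: ideal_genMl.
rewrite /Sum mulr_suml; apply: ideal_gen_sum => a _ /=.
have al := ltn_ord a.
rewrite (_ : y0 ^+ l = y0 ^+ a.+1 * y0 ^+ (l - a.+1)); last by rewrite -exprD subnKC.
by rewrite mulrACA mulrC; apply/ideal_genMl/IH.
Qed.

Lemma jet_var_saturation x :
  simple_graph adj -> is_minimal_vertex_cover adj W ->
  @jet_vars k n s W x -> in_saturation J f x.
Proof.
move=> sg mvc [i [l [iW ->]]].
have [y yW iy] := minimal_cover_neighbour sg mvc iW.
exists l.+1; rewrite /compl_prod (bigD1 y) ?inE //= exprMn mulrA -jXn_ord.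
exact/ideal_genMr/jet_edge_ideal_var_exp.
Qed.

End JetEdgeIdeal.

Theorem mainTheorem2 (k : fieldType) (n : nat) (adj : rel 'I_n)
  (W : {set 'I_n}) (s : nat) :
  simple_graph adj -> connected_graph adj -> has_edge adj ->
  is_minimal_vertex_cover adj W ->
  forall g : {mpoly k[n * s.+1]},
    in_ideal_gen (@jet_vars k n s W) g <->
    in_saturation (@jet_edge_ideal k n s adj) (@compl_prod k n s W) g.
Proof.
move=> sg _ _ mvc g; split.
  by apply: saturation_ideal_gen => x; apply: jet_var_saturation.
move=> [M JgfM]; apply/jet_vars_var_ideal.
apply: (regular_modX (M := M) (@regular_compl_prod k n s W)).
by apply/jet_vars_var_ideal/(jet_edge_ideal_sub mvc.1).
Qed.
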